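(* Every Tarskian logic $\mathcal{L}=({\bf F}(\Theta,\mathcal{V}),\vdash)$ is characterized by a two-valued RNmatrix, i.e. there is an RNmatrix $\mathcal{M}=(\mathcal{A},\{1\},\mathcal{F})$ over $\Theta$ whose multialgebra $\mathcal{A}$ has universe $\{0,1\}$ such that for all $\Gamma\cup\{\varphi\}$, $\Gamma\vdash\varphi$ iff $\Gamma\vDash^{\mathsf{RN}}_{\mathcal{M}}\varphi$. If in addition $\mathcal{L}$ is structural, then $\mathcal{M}$ can be chosen structural.
   Context: A logic $({\bf F}(\Theta,\mathcal{V}),\vdash)$ over the formula algebra of a signature $\Theta$ (with denumerable set $\mathcal{V}$ of variables) is Tarskian if $\vdash$ is reflexive ($\varphi\in\Gamma\Rightarrow\Gamma\vdash\varphi$), monotone, and satisfies cut (if $\Gamma\vdash\delta$ for all $\delta\in\Delta$ and $\Delta\vdash\psi$ then $\Gamma\vdash\psi$); structural if closed under substitutions (endomorphisms of the formula algebra). A $\Theta$-multialgebra assigns to each $n$-ary connective $\sigma$ a function $\sigma_{\mathcal{A}}:A^n\to\wp(A)\setminus\{\emptyset\}$; a valuation is $\nu:{\bf F}(\Theta,\mathcal{V})\to A$ with $\nu(\sigma(\varphi_1,\dots,\varphi_n))\in\sigma_{\mathcal{A}}(\nu(\varphi_1),\dots,\nu(\varphi_n))$. An RNmatrix is $(\mathcal{A},D,\mathcal{F})$ with $\emptyset\neq D\subseteq A$ and $\mathcal{F}$ a set of valuations; it is structural if $\nu\circ\rho\in\mathcal{F}$ whenever $\nu\in\mathcal{F}$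 and $\rho$ is a substitution; $\Gamma\vDash^{\mathsf{RN}}_{\mathcal{M}}\varphi$ iff every $\nu\in\mathcal{F}$ with $\nu[\Gamma]\subseteq D$ has $\nu(\varphi)\in D$. *)

From Stdlib Require Import Fin.

Definition signature := nat -> Type.

(* Formula algebra F(Theta, V) with V = nat (denumerably many variables). *)
Inductive formula (Theta : signature) : Type :=
| Var : nat -> formula Theta
| App : forall n : nat, Theta n -> (Fin.t n -> formula Theta) -> formula Theta.
Arguments Var {Theta} _.
Arguments App {Theta} n _ _.

Definition fset (Theta : signature) := formula Theta -> Prop.

(* Substitutions = endomorphisms of the (absolutely free) formula algebra,
   determined by their values on variables. *)
Fixpoint subst {Theta : signature} (s : nat -> formula Theta) (phi : formula Theta)
  : formula Theta :=
  match phi with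
  | Var x => s x
  | App n c args => App n c (fun i => subst s (args i))
  end.

Definition cons_rel (Theta : signature) := fset Theta -> formula Theta -> Prop.

Definition tarskian {Theta : signature} (vdash : cons_rel Theta) : Prop :=
  (forall (Gamma : fset Theta) phi, Gamma phi -> vdash Gamma phi) /\
  (forall (Gamma Delta : fset Theta) phi,
      (forall psi, Gamma psi -> Delta psi) -> vdash Gamma phi -> vdash Delta phi) /\
  (forall (Gamma Delta : fset Theta) psi,
      (forall delta, Delta delta -> vdash Gamma delta) -> vdash Delta psi ->
      vdash Gamma psi).

Definition structural_logic {Theta : signature} (vdash : cons_rel Theta) : Prop :=
  forall (s : nat -> formula Theta) (Gamma : fset Theta) phi,
    vdash Gamma phi ->
    vdash (fun psi => exists gamma, Gamma gamma /\ psi = subst s gamma) (subst s phi).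

(* A Theta-multialgebra with carrier A: each n-ary connective is interpreted
   as a map A^n -> (nonempty subsets of A). *)
Record multialgebra (Theta : signature) (A : Type) := {
  mop : forall n : nat, Theta n -> (Fin.t n -> A) -> A -> Prop;
  mop_nonempty : forall n (c : Theta n) (a : Fin.t n -> A), exists b, mop n c a b
}.
Arguments mop {Theta A} _ n _ _ _.

Definition valuation {Theta : signature} {A : Type} (M : multialgebra Theta A)
  (nu : formula Theta -> A) : Prop :=
  forall n (c : Theta n) (args : Fin.t n -> formula Theta),
    mop M n c (fun i => nu (args i)) (nu (App n c args)).

Record RNmatrix (Theta : signature) (A : Type) := {
  rn_alg : multialgebra Theta A;
  rn_D : A -> Prop;
  rn_D_nonempty : exists a, rn_D a;
  rn_F : (formula Theta -> A) -> Prop;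
  rn_F_val : forall nu, rn_F nu -> valuation rn_alg nu
}.
Arguments rn_alg {Theta A} _.
Arguments rn_D {Theta A} _ _.
Arguments rn_F {Theta A} _ _.

Definition structural_RN {Theta : signature} {A : Type} (M : RNmatrix Theta A) : Prop :=
  forall nu (s : nat -> formula Theta),
    rn_F M nu -> rn_F M (fun phi => nu (subst s phi)).

Definition RN_conseq {Theta : signature} {A : Type} (M : RNmatrix Theta A)
  (Gamma : fset Theta) (phi : formula Theta) : Prop :=
  forall nu, rn_F M nu ->
    (forall gamma, Gamma gamma -> rn_D M (nu gamma)) -> rn_D M (nu phi).

(* Two-valued: carrier {0,1} = bool (false = 0, true = 1), designated set {1}. *)
Definition two_valued_char {Theta : signature} (vdash : cons_rel Theta)
  (M : RNmatrix Theta bool) : Prop :=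
  (forall b, rn_D M b <-> b = true) /\
  (forall Gamma phi, vdash Gamma phi <-> RN_conseq M Gamma phi).

From Stdlib Require Import ClassicalDescription.

(* Take on {0,1} the multialgebra in which every connective may
   take any value, so that every map from formulas to {0,1} is a valuation,
   and restrict the valuations to the characteristic functions of the sets
   of consequences  {phi | Delta |- phi}  of arbitrary sets Delta, with 1
   designated.
   - Soundness (needs cut): if Gamma |- phi and nu is the characteristic
     function of the consequences of Delta with nu[Gamma] = 1, then
     Delta |- Gamma, hence Delta |- phi, i.e. nu(phi) = 1.
   - Completeness (needs reflexivity): the characteristic function of the
     consequences of Gamma itself designates Gamma, so if Gamma entails phi
     in the RNmatrix then Gamma |- phi.
   - Structurality: if nu characterizes the consequences of Delta, then
     nu o s characterizes the consequences of {psi | Delta |- s(psi)}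
     (by structurality and cut), so the RNmatrix is closed under
     substitutions whenever the logic is. *)

Definition full_multialgebra (Theta : signature) (A : Type) (a0 : A) :
  multialgebra Theta A :=
  {| mop := fun _ _ _ _ => True;
     mop_nonempty := fun _ _ _ => ex_intro (fun _ => True) a0 I |}.

Lemma full_multialgebra_valuation (Theta : signature) (A : Type) (a0 : A)
  (nu : formula Theta -> A) : valuation (full_multialgebra Theta A a0) nu.
Proof. intros n c args; exact I. Qed.

Section TwoValuedCharacterization.

Variable Theta : signature.
Variable vdash : cons_rel Theta.

Definition theory_valuation (nu : formula Theta -> bool) : Prop :=
  exists Delta : fset Theta, forall phi, nu phi = true <-> vdash Delta phi.

Definition theory_RNmatrix : RNmatrix Theta bool :=
  {| rn_alg := full_multialgebra Theta bool true;
     rn_D := fun b => b = true;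
     rn_D_nonempty := ex_intro (fun b => b = true) true eq_refl;
     rn_F := theory_valuation;
     rn_F_val := fun nu _ => full_multialgebra_valuation Theta bool true nu |}.

(* The (classically defined) characteristic function of the consequences of
   Gamma: the witness for completeness. *)
Definition consequence_indicator (Gamma : fset Theta) (phi : formula Theta) : bool :=
  if excluded_middle_informative (vdash Gamma phi) then true else false.

Lemma consequence_indicator_spec (Gamma : fset Theta) (phi : formula Theta) :
  consequence_indicator Gamma phi = true <-> vdash Gamma phi.
Proof.
  unfold consequence_indicator.
  destruct (excluded_middle_informative (vdash Gamma phi)) as [H | H];
    split; intro; congruence || contradiction || assumption.
Qed.

Lemma consequence_indicator_theory (Gamma : fset Theta) :
  theory_valuation (consequence_indicator Gamma).
Proof. exists Gamma; exact (consequence_indicator_spec Gamma). Qed.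

Hypothesis vdash_refl : forall (Gamma : fset Theta) phi, Gamma phi -> vdash Gamma phi.
Hypothesis vdash_cut : forall (Gamma Delta : fset Theta) psi,
  (forall delta, Delta delta -> vdash Gamma delta) -> vdash Delta psi ->
  vdash Gamma psi.

Lemma theory_RNmatrix_sound (Gamma : fset Theta) (phi : formula Theta) :
  vdash Gamma phi -> RN_conseq theory_RNmatrix Gamma phi.
Proof.
  intros Hder nu [Delta HDelta] HGamma; simpl in *.
  apply HDelta, (vdash_cut Delta Gamma phi); [| exact Hder].
  intros gamma Hgamma; apply HDelta, HGamma, Hgamma.
Qed.

Lemma theory_RNmatrix_complete (Gamma : fset Theta) (phi : formula Theta) :
  RN_conseq theory_RNmatrix Gamma phi -> vdash Gamma phi.
Proof.
  intro Hval; apply consequence_indicator_spec, Hval.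
  - apply consequence_indicator_theory.
  - intros gamma Hgamma; simpl.
    apply consequence_indicator_spec, vdash_refl, Hgamma.
Qed.

Lemma theory_RNmatrix_char : two_valued_char vdash theory_RNmatrix.
Proof.
  split.
  - intro b; simpl; tauto.
  - intros Gamma phi; split;
      [apply theory_RNmatrix_sound | apply theory_RNmatrix_complete].
Qed.

Lemma theory_valuation_subst (s : nat -> formula Theta) (nu : formula Theta -> bool) :
  structural_logic vdash -> theory_valuation nu ->
  theory_valuation (fun phi => nu (subst s phi)).
Proof.
  intros Hstruct [Delta HDelta].
  set (Delta_s := fun psi => vdash Delta (subst s psi)).
  exists Delta_s; intro phi; split.
  - intro Hphi; apply vdash_refl, HDelta, Hphi.
  - intro Hder; apply HDelta.
    apply (vdash_cut Delta
             (fun psi => exists gamma, Delta_s gamma /\ psi = subst s gamma)).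
    + intros delta [gamma [Hgamma ->]]; exact Hgamma.
    + apply Hstruct, Hder.
Qed.

Lemma theory_RNmatrix_structural :
  structural_logic vdash -> structural_RN theory_RNmatrix.
Proof.
  intros Hstruct nu s Hnu; exact (theory_valuation_subst s nu Hstruct Hnu).
Qed.

End TwoValuedCharacterization.

Theorem mainTheorem2 (Theta : signature) (vdash : cons_rel Theta) :
  tarskian vdash ->
  (exists M : RNmatrix Theta bool, two_valued_char vdash M) /\
  (structural_logic vdash ->
   exists M : RNmatrix Theta bool, two_valued_char vdash M /\ structural_RN M).
Proof.
  intros [Hrefl [_ Hcut]].
  pose proof (theory_RNmatrix_char Theta vdash Hrefl Hcut) as Hchar.
  split.
  - exists (theory_RNmatrix Theta vdash); exact Hchar.
  - intro Hstruct; exists (theory_RNmatrix Theta vdash); split; [exact Hchar |].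
    exact (theory_RNmatrix_structural Theta vdash Hrefl Hcut Hstruct).
Qed.
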